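(* Let $n\ge2$ and let $P$ be a $2n$-gon in the plane whose sides are alternately horizontal and vertical (axis aligned), in general enough position that $T(P)$ is defined. Then $T(P)$ is again axis aligned; more precisely, if the $k$-th side of $P$ is vertical (resp. horizontal) then the $k$-th side of $T(P)$ is horizontal (resp. vertical).
   Context: For a polygon with vertices $V_1,\dots,V_m$ (indices mod $m$) in $\mathbb{RP}^2$, the $k$-th side is $V_kV_{k+1}$, and its projective normal $n_k$ is the line through the point $(V_{k-1}V_{k+1})\cap(V_kV_{k+2})$ and the point $(V_{k-1}V_k)\cap(V_{k+1}V_{k+2})$. $T(P)$ is the polygon whose vertices are $n_1\cap n_2, n_2\cap n_3,\dots$, so that its $k$-th side lies on the line $n_k$. Parallel lines are regarded as meeting at the corresponding point at infinity. *)

From HB Require Import structures.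
From mathcomp Require Import all_boot all_order all_algebra.
Set Implicit Arguments. Unset Strict Implicit. Unset Printing Implicit Defensive.
Import Order.TTheory GRing.Theory Num.Theory.
Local Open Scope ring_scope.

(* Homogeneous coordinates on RP^2 over a real field R: a point or a line is a
   nonzero triple.  The line through
   two points, and the intersection point of two lines, are both given by the
   cross product; the result is the zero triple exactly when the two inputs are
   projectively equal (or one is zero), i.e. when the construction is undefined.
   Parallel affine lines meet at a point with last coordinate 0 (at infinity). *)

Definition hvec (R : nzRingType) := (R * R * R)%type.

Definition cross (R : nzRingType) (p q : hvec R) : hvec R :=
  let '(a, b, c) := p in let '(d, e, f) := q in
  (b * f - c * e, c * d - a * f, a * e - b * d).

Definition join (R : nzRingType) (p q : hvec R) : hvec R := cross p q.
Definition meet (R : nzRingType) (l l' : hvec R) : hvec R := cross l l'.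

Definition hnz (R : nzRingType) (p : hvec R) : bool := p != (0, 0, 0).

Definition hom (R : nzRingType) (v : R * R) : hvec R := (v.1, v.2, 1).

Definition finite_pt (R : nzRingType) (p : hvec R) : bool := p.2 != 0.

Definition xcoord (R : fieldType) (p : hvec R) : R := p.1.1 / p.2.
Definition ycoord (R : fieldType) (p : hvec R) : R := p.1.2 / p.2.

Section Polygon.
Variable R : fieldType.
Variable m : nat.
(* a polygon with m vertices V_0, ..., V_(m-1) in the affine plane; indices mod m *)
Variable V : 'I_m -> R * R.

Definition nx (i : 'I_m) : 'I_m := ordS i.
Definition pv (i : 'I_m) : 'I_m := ord_pred i.
Definition HV (i : 'I_m) : hvec R := hom (V i).

Definition Apt (k : 'I_m) : hvec R :=
  meet (join (HV (pv k)) (HV (nx k))) (join (HV k) (HV (nx (nx k)))).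
Definition Bpt (k : 'I_m) : hvec R :=
  meet (join (HV (pv k)) (HV k)) (join (HV (nx k)) (HV (nx (nx k)))).
(* projective normal of the k-th side V_k V_{k+1} *)
Definition pnormal (k : 'I_m) : hvec R := join (Apt k) (Bpt k).
(* k-th vertex of T(P): n_{k-1} ∩ n_k, so that its k-th side lies on n_k *)
Definition Tvtx (k : 'I_m) : hvec R := meet (pnormal (pv k)) (pnormal k).

Definition T_defined : Prop :=
  forall k : 'I_m,
    [/\ hnz (Apt k), hnz (Bpt k), hnz (pnormal k) &
        [/\ hnz (Tvtx k), finite_pt (Tvtx k) &
        hnz (join (Tvtx k) (Tvtx (nx k)))]].

Definition side_vertical (k : 'I_m) : Prop := (V k).1 = (V (nx k)).1.
Definition side_horizontal (k : 'I_m) : Prop := (V k).2 = (V (nx k)).2.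

Definition axis_aligned : Prop :=
  forall k : 'I_m,
    (side_vertical k /\ side_horizontal (nx k)) \/
    (side_horizontal k /\ side_vertical (nx k)).

Definition T_side_horizontal (k : 'I_m) : Prop :=
  ycoord (Tvtx k) = ycoord (Tvtx (nx k)).
Definition T_side_vertical (k : 'I_m) : Prop :=
  xcoord (Tvtx k) = xcoord (Tvtx (nx k)).

End Polygon.

From HB Require Import structures.
From mathcomp Require Import all_boot all_order all_algebra.
From mathcomp Require Import ring.
Import Order.TTheory GRing.Theory Num.Theory.
Local Open Scope ring_scope.

(* The k-th side of T(P) lies on the projective normal n_k.  When the k-th side
   of P is vertical, its two neighbours are horizontal; then the two auxiliary
   points (V_{k-1}V_{k+1}) ∩ (V_kV_{k+2}) and (V_{k-1}V_k) ∩ (V_{k+1}V_{k+2})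
   have the same y-coordinate (a direct computation), so n_k is horizontal and
   so is the side of T(P) on it.  The horizontal case is symmetric.  Alternation
   is forced because a side that is both vertical and horizontal is a single
   point, and then n_k is undefined. *)

Lemma cross_self (R : comNzRingType) (p : hvec R) : cross p p = (0, 0, 0).
Proof. by case: p => [[a b] c]; rewrite /cross; congr (_, _, _); ring. Qed.

(* A line (a : b : c) with a = 0 is horizontal, with b = 0 vertical. *)
Lemma ycoord_meet_horizontal (R : fieldType) (l l1 l2 : hvec R) :
  l.1.1 = 0 -> finite_pt (meet l1 l) -> finite_pt (meet l l2) ->
  ycoord (meet l1 l) = ycoord (meet l l2).
Proof.
case: l1 => [[p1 p2] p3]; case: l2 => [[q1 q2] q3]; case: l => [[a b] c] /= ->.
rewrite /finite_pt /ycoord /meet /= => fin1 fin2.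
have b_neq0 : b != 0 by apply: contraNneq fin1 => ->; apply/eqP; ring.
have p1_neq0 : p1 != 0 by apply: contraNneq fin1 => ->; apply/eqP; ring.
have q1_neq0 : q1 != 0 by apply: contraNneq fin2 => ->; apply/eqP; ring.
by field; rewrite oppr_eq0 mulf_neq0 ?b_neq0 ?p1_neq0 ?q1_neq0.
Qed.

Lemma xcoord_meet_vertical (R : fieldType) (l l1 l2 : hvec R) :
  l.1.2 = 0 -> finite_pt (meet l1 l) -> finite_pt (meet l l2) ->
  xcoord (meet l1 l) = xcoord (meet l l2).
Proof.
case: l1 => [[p1 p2] p3]; case: l2 => [[q1 q2] q3]; case: l => [[a b] c] /= ->.
rewrite /finite_pt /xcoord /meet /= => fin1 fin2.
have a_neq0 : a != 0 by apply: contraNneq fin1 => ->; apply/eqP; ring.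
have p2_neq0 : p2 != 0 by apply: contraNneq fin1 => ->; apply/eqP; ring.
have q2_neq0 : q2 != 0 by apply: contraNneq fin2 => ->; apply/eqP; ring.
by field; rewrite oppr_eq0 mulf_neq0 ?a_neq0 ?p2_neq0 ?q2_neq0.
Qed.

Section ProjectiveNormal.
Context {R : fieldType} {m : nat} {V : 'I_m -> R * R}.

Lemma nx_pv (k : 'I_m) : nx (pv k) = k.
Proof. exact: ord_predK. Qed.

Lemma pv_nx (k : 'I_m) : pv (nx k) = k.
Proof. exact: ordSK. Qed.

Lemma pnormal_point_side {k : 'I_m} :
  side_vertical V k -> side_horizontal V k -> pnormal V k = (0, 0, 0).
Proof.
rewrite /side_vertical /side_horizontal => eqx eqy.
have eqV : HV V k = HV V (nx k) by rewrite /HV /hom; congr (_, _, _).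
by rewrite /pnormal /Apt /Bpt eqV /join cross_self.
Qed.

Lemma not_vertical_horizontal {k : 'I_m} :
  hnz (pnormal V k) -> ~ (side_vertical V k /\ side_horizontal V k).
Proof. by move=> nz [ver hor]; move: nz; rewrite /hnz (pnormal_point_side ver hor) eqxx. Qed.

Lemma pnormal_vertical_side {k : 'I_m} :
  side_horizontal V (pv k) -> side_vertical V k -> side_horizontal V (nx k) ->
  (pnormal V k).1.1 = 0.
Proof.
rewrite /side_vertical /side_horizontal /pnormal /Apt /Bpt /HV /hom nx_pv.
case: (V (pv k)) => x0 y0; case: (V k) => x1 y1; case: (V (nx k)) => x2 y2.
by case: (V (nx (nx k))) => x3 y3 /= -> -> ->; ring.
Qed.

Lemma pnormal_horizontal_side {k : 'I_m} :
  side_vertical V (pv k) -> side_horizontal V k -> side_vertical V (nx k) ->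
  (pnormal V k).1.2 = 0.
Proof.
rewrite /side_vertical /side_horizontal /pnormal /Apt /Bpt /HV /hom nx_pv.
case: (V (pv k)) => x0 y0; case: (V k) => x1 y1; case: (V (nx k)) => x2 y2.
by case: (V (nx (nx k))) => x3 y3 /= -> -> ->; ring.
Qed.

Hypothesis aligned : axis_aligned V.
Hypothesis pnormal_nz : forall k : 'I_m, hnz (pnormal V k).

Lemma neighbours_of_vertical_side {k : 'I_m} :
  side_vertical V k -> side_horizontal V (pv k) /\ side_horizontal V (nx k).
Proof.
move=> ver; split.
- case: (aligned (pv k)) => [[_ hor]|[hor _]] //; rewrite nx_pv in hor.
  by case: (not_vertical_horizontal (pnormal_nz k)); split.
- case: (aligned k) => [[_ hor]|[hor _]] //.
  by case: (not_vertical_horizontal (pnormal_nz k)); split.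
Qed.

Lemma neighbours_of_horizontal_side {k : 'I_m} :
  side_horizontal V k -> side_vertical V (pv k) /\ side_vertical V (nx k).
Proof.
move=> hor; split.
- case: (aligned (pv k)) => [[ver _]|[_ ver]] //; rewrite nx_pv in ver.
  by case: (not_vertical_horizontal (pnormal_nz k)); split.
- case: (aligned k) => [[ver _]|[_ ver]] //.
  by case: (not_vertical_horizontal (pnormal_nz k)); split.
Qed.

End ProjectiveNormal.

Section TSides.
Context {R : fieldType} {m : nat} {V : 'I_m -> R * R} {k : 'I_m}.
Hypotheses (fin_k : finite_pt (Tvtx V k)) (fin_nx : finite_pt (Tvtx V (nx k))).

Lemma T_side_horizontal_of_pnormal :
  (pnormal V k).1.1 = 0 -> T_side_horizontal V k.
Proof.
move: fin_nx; rewrite /T_side_horizontal /Tvtx pv_nx => fin_nx' hor.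
exact: ycoord_meet_horizontal.
Qed.

Lemma T_side_vertical_of_pnormal :
  (pnormal V k).1.2 = 0 -> T_side_vertical V k.
Proof.
move: fin_nx; rewrite /T_side_vertical /Tvtx pv_nx => fin_nx' ver.
exact: xcoord_meet_vertical.
Qed.

End TSides.

Theorem mainTheorem11 (R : realFieldType) (n : nat) (V : 'I_(2 * n) -> R * R) :
  (2 <= n)%N ->
  axis_aligned V ->
  T_defined V ->
  forall k : 'I_(2 * n),
    (side_vertical V k -> T_side_horizontal V k) /\
    (side_horizontal V k -> T_side_vertical V k).
Proof.
move=> _ aligned Tdef k.
have pnormal_nz j : hnz (pnormal V j) by case: (Tdef j).
have [_ _ _ [_ fin_k _]] := Tdef k; have [_ _ _ [_ fin_nx _]] := Tdef (nx k).
split=> [ver | hor].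
- have [hor_pv hor_nx] := neighbours_of_vertical_side aligned pnormal_nz ver.
  exact/T_side_horizontal_of_pnormal/pnormal_vertical_side.
- have [ver_pv ver_nx] := neighbours_of_horizontal_side aligned pnormal_nz hor.
  exact/T_side_vertical_of_pnormal/pnormal_horizontal_side.
Qed.
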